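(* Let $\mu$ be a $\sigma$-finite signed measure on a measurable space $(\Omega,\mathcal B)$, and let $\Omega^+,\Omega^-$ be a Hahn decomposition for $\mu$ (disjoint measurable sets with union $\Omega$, $\mu\ge0$ on measurable subsets of $\Omega^+$, $\mu\le0$ on measurable subsets of $\Omega^-$). Writing $\operatorname{range}\lambda=\{\lambda(A):A\in\mathcal B\}$, we have $\operatorname{range}|\mu|=\operatorname{range}\mu-\mu(\Omega^-)$ if $\mu(\Omega^-)>-\infty$, and $\operatorname{range}|\mu|=-\operatorname{range}\mu+\mu(\Omega^+)$ if $\mu(\Omega^+)<+\infty$.
   Context: A $\sigma$-finite signed measure is a countably additive extended-real-valued set function vanishing on $\emptyset$, taking at most one of the values $\pm\infty$, whose total variation $|\mu|$ is $\sigma$-finite. For a set $S\subset\mathbb R\cup\{\pm\infty\}$ and real $c$, $S+c=\{s+c:s\in S\}$ and $-S=\{-s:s\in S\}$. *)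

From HB Require Import structures.
From mathcomp Require Import all_boot all_order all_algebra.
From mathcomp Require Import all_classical all_reals all_analysis.
Set Implicit Arguments. Unset Strict Implicit. Unset Printing Implicit Defensive.
Import Order.TTheory GRing.Theory Num.Theory.
Local Open Scope classical_set_scope.
Local Open Scope ring_scope.
Local Open Scope ereal_scope.

Definition signed_measure d (T : measurableType d) (R : realType)
    (mu : set T -> \bar R) : Prop :=
  [/\ mu set0 = 0,
      semi_sigma_additive mu &
      ~ ((exists2 A, measurable A & mu A = +oo) /\
         (exists2 B, measurable B & mu B = -oo))].

Definition tot_var d (T : measurableType d) (R : realType)
    (mu : set T -> \bar R) (A : set T) : \bar R :=
  ereal_sup [set s | exists (n : nat) (E : (set T)^nat),
     [/\ (forall i, measurable (E i)), trivIset `I_n E,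
         (A = \bigcup_(i in `I_n) E i) &
         s = \sum_(0 <= i < n) `| mu (E i) |]].

Definition sigma_finite_signed_measure d (T : measurableType d) (R : realType)
    (mu : set T -> \bar R) : Prop :=
  signed_measure mu /\ sigma_finite setT (tot_var mu).

Definition Hahn_decomp d (T : measurableType d) (R : realType)
    (mu : set T -> \bar R) (P N : set T) : Prop :=
  [/\ measurable P, measurable N, P `&` N = set0, P `|` N = setT &
    (forall A, measurable A -> A `<=` P -> 0 <= mu A) /\
    (forall A, measurable A -> A `<=` N -> mu A <= 0)].

Definition set_range d (T : measurableType d) (R : realType)
    (mu : set T -> \bar R) : set (\bar R) := [set mu A | A in measurable].

From HB Require Import structures.
From mathcomp Require Import all_boot all_order all_algebra.
From mathcomp Require Import all_classical all_reals all_analysis.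
Import Order.TTheory GRing.Theory Num.Theory.
Local Open Scope classical_set_scope.
Local Open Scope ring_scope.
Local Open Scope ereal_scope.

(* With N the negative part, the Jordan decomposition reads
   |mu|(A) = mu(A \ N) - mu(A & N).  Since mu(A + N) = mu(A \ N) + mu(N \ A)
   and mu(N) = mu(A & N) + mu(N \ A), finiteness of mu(N) turns this into
   |mu|(A) = mu(A + N) - mu(N), where A + N is the symmetric difference;
   A |-> A + N is an involution of the measurable sets, so the two ranges
   agree.  The case mu(P) < +oo is symmetric, with |mu|(A) = mu(P) - mu(A + P). *)

Lemma semi_additive_bigcup_I d (T : ringOfSetsType d) (R : numFieldType)
    (mu : set T -> \bar R) (F : (set T)^nat) n :
  measure_function.semi_additive mu -> (forall i, measurable (F i)) ->
  trivIset `I_n F ->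
  mu (\bigcup_(i in `I_n) F i) = \sum_(0 <= i < n) mu (F i).
Proof.
move=> muA mF tF; pose G i := if (i < n)%N then F i else set0.
have mG i : measurable (G i) by rewrite /G; case: ifP.
have tG : trivIset setT G.
  move=> i j _ _; rewrite /G; do 2![case: ifP] => jn iN; rewrite ?setI0 ?set0I;
    by [apply: tF | case].
have UG : \bigcup_(i in `I_n) F i = \big[setU/set0]_(i < n) G i.
  by rewrite -bigcup_mkord; apply: eq_bigcupr => i /=; rewrite /G => ->.
rewrite UG muA //; last exact: bigsetU_measurable.
by rewrite big_mkord; apply: eq_bigr => i _; rewrite /G ltn_ord.
Qed.

Lemma set_range_involutive d (T : measurableType d) (R : realType)
    (mu nu : set T -> \bar R) (phi : set T -> set T) (g : \bar R -> \bar R) :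
  (forall A, measurable A -> measurable (phi A)) -> involutive phi ->
  (forall A, measurable A -> nu A = g (mu (phi A))) ->
  set_range nu = [set g x | x in set_range mu].
Proof.
move=> mphi phiK nuE; apply/seteqP; split.
- move=> _ [A mA <-]; rewrite nuE //; exists (mu (phi A)) => //.
  by exists (phi A) => //; exact: mphi.
- move=> _ [_ [B mB <-] <-]; exists (phi B); first exact: mphi.
  by rewrite nuE ?phiK //; exact: mphi.
Qed.

Lemma measurableY d (T : ringOfSetsType d) (A B : set T) :
  measurable A -> measurable B -> measurable (A `+` B).
Proof. by move=> mA mB; apply: measurableU; exact: measurableD. Qed.

Lemma setY_involutive T (C : set T) : involutive (setY^~ C).
Proof. by move=> B; rewrite -setYA setYK setY0. Qed.

Section Hahn_decomposition.
Context d (T : measurableType d) (R : realType) (mu : set T -> \bar R)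
  (N : set T).
Hypotheses (mu0 : mu set0 = 0) (muA : measure_function.semi_additive mu)
  (mN : measurable N)
  (mu_ge0 : forall A, measurable A -> A `<=` ~` N -> 0 <= mu A)
  (mu_le0 : forall A, measurable A -> A `<=` N -> mu A <= 0).

Let muU : additive2 mu.
Proof. exact/additive2P. Qed.

Let disjoint_setDD (A B C : set T) : (A `\` B) `&` (C `\` A) = set0.
Proof. by apply/seteqP; split => x //= [[Ax _] [_ /(_ Ax)]]. Qed.

Let disjoint_setDI A : (A `\` N) `&` (A `&` N) = set0.
Proof. by rewrite setIC -setIA setDIK setI0. Qed.

Lemma measureDI A : measurable A -> mu A = mu (A `\` N) + mu (A `&` N).
Proof.
move=> mA; rewrite -muU ?disjoint_setDI //; first by rewrite setUC setUIDK.
- exact: measurableD.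
- exact: measurableI.
Qed.

Lemma measureD_ge0 A : measurable A -> 0 <= mu (A `\` N).
Proof. by move=> mA; apply: mu_ge0; [exact: measurableD | move=> x []]. Qed.

Lemma measureI_le0 A : measurable A -> mu (A `&` N) <= 0.
Proof. by move=> mA; apply: mu_le0; [exact: measurableI | exact: subIsetr]. Qed.

Lemma abse_le_Hahn A : measurable A -> `|mu A| <= mu (A `\` N) - mu (A `&` N).
Proof.
move=> mA; rewrite measureDI //; apply: le_trans (lee_abs_add _ _) _.
by rewrite gee0_abs ?lee0_abs ?measureD_ge0 ?measureI_le0.
Qed.

Lemma tot_var_Hahn A : measurable A ->
  tot_var mu A = mu (A `\` N) - mu (A `&` N).
Proof.
move=> mA; apply/eqP; rewrite eq_le; apply/andP; split.
- apply: ge_ereal_sup => _ [n [E [mE tE -> ->]]].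
  have mEN i : measurable (E i `&` N) := measurableI _ _ (mE i) mN.
  have mEDN i : measurable (E i `\` N) := measurableD (mE i) mN.
  rewrite setD_bigcupl setI_bigcupl !semi_additive_bigcup_I //; first last.
  + by move=> i j Ii Ij [x [[? _] [? _]]]; apply: tE => //; exists x.
  + exact: trivIset_setIr.
  apply: (@le_trans _ _ (\sum_(0 <= i < n) (mu (E i `\` N) - mu (E i `&` N)))).
    by apply: lee_sum => i _; exact: abse_le_Hahn.
  rewrite big_split /= sumeN // => i j _ _.
  apply: ltpinfty_adde_def;
    by rewrite inE (le_lt_trans (measureI_le0 _ (mE _))) ?ltry.
- apply: ereal_sup_ubound; exists 2%N, (bigcup2 (A `\` N) (A `&` N)); split.
  + by move=> [|[|[]]] //=; [exact: measurableD | exact: measurableI].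
  + apply: (sub_trivIset (subsetT _)).
    by rewrite -trivIset_bigcup2 disjoint_setDI.
  + by rewrite bigcup2inE setUC setUIDK.
  + rewrite big_nat_recr //= big_nat1 /=.
    by rewrite gee0_abs ?lee0_abs ?measureD_ge0 ?measureI_le0.
Qed.

Lemma le_measure_subN X : measurable X -> X `<=` N -> mu N <= mu X.
Proof.
move=> mX XN; have mNX : measurable (N `\` X) by exact: measurableD.
rewrite -(setDUK XN) muU ?setDIK // geeDl // mu_le0 // => x [].
Qed.

Lemma le_measure_subCN X : measurable X -> X `<=` ~` N -> mu X <= mu (~` N).
Proof.
move=> mX XCN; have mCNX : measurable (~` N `\` X).
  by apply: measurableD => //; exact: measurableC.
rewrite -(setDUK XCN) muU ?setDIK // leeDl // mu_ge0 // => x [].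
Qed.

Lemma fin_num_measure_subN X : -oo < mu N -> measurable X -> X `<=` N ->
  mu X \is a fin_num.
Proof.
move=> muN_gtNy mX XN; rewrite le0_fin_numE ?mu_le0 //.
exact: lt_le_trans muN_gtNy (le_measure_subN _ mX XN).
Qed.

Lemma fin_num_measure_subCN X : mu (~` N) < +oo -> measurable X ->
  X `<=` ~` N -> mu X \is a fin_num.
Proof.
move=> muCN_ltey mX XCN; rewrite ge0_fin_numE ?mu_ge0 //.
exact: le_lt_trans (le_measure_subCN _ mX XCN) muCN_ltey.
Qed.

Lemma tot_var_setY A : -oo < mu N -> measurable A ->
  tot_var mu A = mu (A `+` N) - mu N.
Proof.
move=> muN_gtNy mA; have mNA : measurable (N `\` A) by exact: measurableD.
have muNE : mu N = mu (N `\` A) + mu (A `&` N).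
  rewrite -muU //; first by rewrite setIC setUC setUIDK.
  - exact: measurableI.
  - by rewrite setIA setDKI set0I.
have muYE : mu (A `+` N) = mu (A `\` N) + mu (N `\` A).
  by apply: muU => //; exact: measurableD.
have finNA : mu (N `\` A) \is a fin_num.
  by apply: fin_num_measure_subN => // x [].
rewrite tot_var_Hahn // muYE muNE oppeD ?fin_num_adde_defr //.
by rewrite addeA addeK.
Qed.

Lemma tot_var_setYC A : mu (~` N) < +oo -> measurable A ->
  tot_var mu A = - mu (A `+` ~` N) + mu (~` N).
Proof.
move=> muCN_ltey mA; have mCN : measurable (~` N) by exact: measurableC.
have mCNA : measurable (~` N `\` A) by exact: measurableD.
have muCNE : mu (~` N) = mu (A `\` N) + mu (~` N `\` A).
  rewrite -muU ?disjoint_setDD //.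
    by rewrite [A `\` N]setDE setIC setUIDK.
  exact: measurableD.
have muYE : mu (A `+` ~` N) = mu (A `&` N) + mu (~` N `\` A).
  have -> : A `&` N = A `\` ~` N by rewrite setDE setCK.
  by apply: muU => //; exact: measurableD.
have finCNA : mu (~` N `\` A) \is a fin_num.
  by apply: fin_num_measure_subCN => // x [].
rewrite tot_var_Hahn // muYE muCNE oppeD ?fin_num_adde_defl //.
by rewrite [RHS]addeC addeA (addeAC (mu (A `\` N))) addeK.
Qed.

End Hahn_decomposition.

Theorem lemma1p2 (d : measure_display) (T : measurableType d) (R : realType)
    (mu : set T -> \bar R) (P N : set T) :
  sigma_finite_signed_measure mu ->
  Hahn_decomp mu P N ->
  (-oo < mu N ->
     set_range (tot_var mu) = [set x - mu N | x in set_range mu]) /\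
  (mu P < +oo ->
     set_range (tot_var mu) = [set - x + mu P | x in set_range mu]).
Proof.
move=> [[mu0 samu _] _] [_ mN PN0 PNT [mu_ge0 mu_le0]].
have PE : P = ~` N by rewrite -setTD -PNT setUDK // setIC PN0.
rewrite {}PE in mu_ge0 *.
have muA := semi_sigma_additive_is_additive mu0 samu.
have mCN : measurable (~` N) by exact: measurableC.
split=> [muN_gtNy | muCN_ltey].
- apply: (@set_range_involutive _ _ _ _ _ (setY^~ N)).
  + by move=> B mB; exact: measurableY.
  + exact: setY_involutive.
  + by move=> B mB; exact: tot_var_setY.
- apply: (@set_range_involutive _ _ _ _ _ (setY^~ (~` N))).
  + by move=> B mB; exact: measurableY.
  + exact: setY_involutive.
  + by move=> B mB; exact: tot_var_setYC.
Qed.
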